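(* Let $f\in S(\mathcal{P},\nu,\rho,d,C)$, let $(f_z)_{z\in Z}$ be fidelity approximations with cost-to-bias function $\Phi$, and run Kometo with budget $\Lambda\ge1$. Let $\Psi$ be a non-increasing function with $\Phi\le\Psi$, let $j$ be a non-negative integer and $\tilde h$ a positive real number such that (1) $\Psi(e^j)\le\nu\rho^{\tilde h}$ and (2) $\frac{\tilde\Lambda}{4\tilde h e^j}\ge C\rho^{-d\tilde h}$, where $\tilde\Lambda=\left\lfloor\frac{(e-1)\Lambda}{2Ke(\log\Lambda+1)^2}\right\rfloor$. Then the simple regret of Kometo satisfies $r_\Lambda\le\frac{3\nu}{\rho}\rho^{\tilde h}+2\Psi(\tilde\Lambda)$.
   Context: $\mathcal{X}$ has a hierarchical partitioning $\mathcal{P}=(\mathcal{P}_{h,i})_{h\ge0,0\le i\le K^h-1}$, $K\ge2$: $\mathcal{P}_{0,0}=\mathcal{X}$, the children $\mathcal{P}_{h+1,Ki+l}$ ($0\le l\le K-1$) of $\mathcal{P}_{h,i}$ partition it; each cell has a representative $x_{h,i}\in\mathcal{P}_{h,i}$. $\nu>0$, $\rho\in(0,1)$, $d\ge0$, $C>1$. $S(\mathcal{P},\nu,\rho,d,C)$: set of $f:\mathcal{X}\to\mathbb{R}$ such that for one global maximizer $x^\star$ and all $h$, each $x$ in the depth-$h$ cell containing $x^\star$ has $f(x)\ge f(x^\star)-\nu\rho^h$, and for every $h$ at most $C\rho^{-dh}$ depth-$h$ cells $\mathcal{P}_{h,i}$ satisfy $\sup_{\mathcal{P}_{h,i}}f\ge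 f(x^\star)-3\nu\rho^h$. Multi-fidelity: $Z=[0,1]$, $f_z:\mathcal{X}\to\mathbb{R}$, bias $\zeta:Z\to[0,+\infty]$ with strictly increasing $g_z$ and $\sup_x|f(x)-g_z(f_z(x))|\le\zeta(z)$, cost $\lambda$, and for each $c\ge1$ an available fidelity $z_c$ with $\lambda(z_c)\le c$; cost-to-bias function $\Phi(c)=\zeta(z_c)$ on $[1,\infty)$. Simple regret $r_\Lambda=\mathbb{E}[\max f-f(x_\Lambda)]$. Kometo ($\log$ natural): $j_{\max}=\lfloor\log\tilde\Lambda\rfloor$; level $j$ means fidelity $z_{e^j}$; flags $T_{h,i,j}\in\{0,1\}$ (initially 0) and values $f_{h,i,j}=f_{z_{e^j}}(x_{h,i})$ when $T_{h,i,j}=1$. Opening $\mathcal{P}_{h,i}$ at level $j$: for each child $\mathcal{P}_{h+1,i'}$ and $0\le u\le j$, set $T_{h+1,i',u}=1$ and evaluate $f_{h+1,i',u}$. Steps: open $\mathcal{P}_{0,0}$ with budget $\tilde\Lambda$ (level $j_{\max}$); for $h=1..\lfloor\tilde\Lambda\rfloor$, $m=1..\lfloor\tilde\Lambda/h\rfloor$, with $j=\lfloor\log\frac{\tilde\Lambda}{hm}\rfloor$, open at level $j$ the not-yet-opened depth-$h$ cell with $T_{h,i,j}=1$ and highest $f_{h,i,j}$; for $j=0..j_{\max}$ let $x^c_j$ be the representative of a cell maximizing $f_{h,i,j}$ over $T_{h,i,j}=1$ and evaluate $f_{z_{\tilde\Lambda}}(x^c_j)$; output $x_\Lambda=\arg\max_j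 f_{z_{\tilde\Lambda}}(x^c_j)$. *)

From mathcomp Require Import all_boot all_order all_algebra.
From mathcomp Require Import all_classical all_reals all_analysis.
Set Implicit Arguments. Unset Strict Implicit. Unset Printing Implicit Defensive.
Import Order.TTheory GRing.Theory Num.Theory.
Local Open Scope classical_set_scope.
Local Open Scope ring_scope.

Definition hier_partition (X : Type) (K : nat) (P : nat -> nat -> set X)
    (xr : nat -> nat -> X) : Prop :=
  [/\ P 0%N 0%N = setT,
      (forall h i, (i < K ^ h)%N ->
         P h i = \bigcup_(l in [set l : nat | (l < K)%N]) P h.+1 (K * i + l)%N),
      (forall h i l l', (i < K ^ h)%N -> (l < K)%N -> (l' < K)%N -> l <> l' ->
         P h.+1 (K * i + l)%N `&` P h.+1 (K * i + l')%N = set0)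
    & (forall h i, (i < K ^ h)%N -> P h i (xr h i))].

(* sup of f over a cell, in the extended reals (-oo on an empty cell) *)
Definition cell_sup (R : realType) (X : Type) (f : X -> R) (A : set X) : \bar R :=
  ereal_sup [set (f x)%:E | x in A].

Definition class_S (R : realType) (X : Type) (K : nat) (P : nat -> nat -> set X)
    (nu rho d C : R) (f : X -> R) : Prop :=
  exists xstar : X,
    [/\ (forall x, f x <= f xstar),
        (forall h i x, (i < K ^ h)%N -> P h i xstar -> P h i x ->
           f xstar - nu * rho ^+ h <= f x)
      & (forall h (s : seq nat), uniq s ->
           (forall i, i \in s -> (i < K ^ h)%N /\
              ((f xstar - 3 * nu * rho ^+ h)%:E <= cell_sup f (P h i))%E) ->
           (size s)%:R <= C * rho `^ (- (d * h%:R)))].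

Definition fidelity_approx (R : realType) (X : Type) (f : X -> R)
    (fz : R -> X -> R) (zeta : R -> \bar R) (g : R -> R -> R)
    (lam : R -> R) (zc : R -> R) : Prop :=
  [/\ (forall z, 0 <= z <= 1 -> (0 <= zeta z)%E),
      (forall z, 0 <= z <= 1 -> forall a b, a < b -> g z a < g z b),
      (forall z, 0 <= z <= 1 ->
         (ereal_sup [set (`|f x - g z (fz z x)|)%:E | x in setT] <= zeta z)%E)
    & (forall c, 1 <= c -> 0 <= zc c <= 1 /\ lam (zc c) <= c)].

(* cost-to-bias function Phi(c) = zeta(z_c), meaningful on [1, +oo) *)
Definition cost_to_bias (R : realType) (zeta : R -> \bar R) (zc : R -> R)
  : R -> \bar R := fun c => zeta (zc c).

Definition Ltilde (R : realType) (K : nat) (Lam : R) : nat :=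
  Num.truncn ((expR 1 - 1) * Lam / (2 * K%:R * expR 1 * (ln Lam + 1) ^+ 2)).

(* The Kometo algorithm, as a relation describing all admissible runs *)
(* (ties broken arbitrarily).                                          *)
Section Kometo.
Variables (R : realType) (X : Type) (K : nat) (xr : nat -> nat -> X)
  (fz : R -> X -> R) (zc : R -> R).

Definition fval (h i j : nat) : R := fz (zc (expR j%:R)) (xr h i).

Record kstate := KState {
  kT : nat -> nat -> nat -> bool;
  kO : nat -> nat -> bool
}.

Definition kinit : kstate := KState (fun _ _ _ => false) (fun _ _ => false).

Definition open_cell (s : kstate) (h i j : nat) : kstate :=
  KState (fun h' i' u => kT s h' i' u ||
                         [&& h' == h.+1, (K * i <= i')%N, (i' < K * i + K)%N
                           & (u <= j)%N])
         (fun h' i' => kO s h' i' || ((h' == h) && (i' == i))).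

Definition candidate (s : kstate) (h j i : nat) : bool :=
  [&& (i < K ^ h)%N, ~~ kO s h i & kT s h i j].

Inductive kstep (s : kstate) (h j : nat) : kstate -> Prop :=
| KOpen i : candidate s h j i ->
    (forall i', candidate s h j i' -> fval h i' j <= fval h i j) ->
    kstep s h j (open_cell s h i j)
| KSkip : (forall i, ~~ candidate s h j i) -> kstep s h j s.

Inductive krun : kstate -> seq (nat * nat) -> kstate -> Prop :=
| KRnil s : krun s [::] s
| KRcons s s1 s2 h j r : kstep s h j s1 -> krun s1 r s2 -> krun s ((h, j) :: r) s2.

Definition kjlevel (Lt h m : nat) : nat :=
  Num.truncn (ln (Lt%:R / (h * m)%:R : R)).

Definition kschedule (Lt : nat) : seq (nat * nat) :=
  flatten [seq [seq (h, kjlevel Lt h m) | m <- iota 1 (Lt %/ h)] | h <- iota 1 Lt].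

Definition kjmax (Lt : nat) : nat := Num.truncn (ln (Lt%:R : R)).

Definition kometo_output (Lt : nat) (x : X) : Prop :=
  exists (s : kstate) (xc : nat -> X) (jstar : nat),
    [/\ krun (open_cell kinit 0 0 (kjmax Lt)) (kschedule Lt) s,
        (forall j, (j <= kjmax Lt)%N -> exists h i,
           [/\ kT s h i j, xc j = xr h i &
               forall h' i', kT s h' i' j -> fval h' i' j <= fval h i j]),
        (jstar <= kjmax Lt)%N,
        (forall j, (j <= kjmax Lt)%N ->
           fz (zc Lt%:R) (xc j) <= fz (zc Lt%:R) (xc jstar))
      & x = xc jstar].

End Kometo.

Definition simple_regret (R : realType) (X : Type) (f : X -> R) (x : X) : \bar R :=
  (ereal_sup [set (f y)%:E | y in setT] - (f x)%:E)%E.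

From mathcomp Require Import all_boot all_order all_algebra.
From mathcomp Require Import all_classical all_reals all_analysis.
From mathcomp Require Import ring lra.
Import Order.TTheory GRing.Theory Num.Theory.
Local Open Scope classical_set_scope.
Local Open Scope ring_scope.

Set Implicit Arguments. Unset Strict Implicit. Unset Printing Implicit Defensive.

(* Let x* be the maximizer and H = floor(ht).  At each depth h <= H the schedule
   runs, right after some rounds of level >= j, at least Ltilde / (2 h e^j) - 1
   consecutive rounds of level j.  As long as the depth-h cell containing x* is
   not opened, each such round opens a new cell whose level-j value beats it;
   by the bias bound (1) these cells are 3 nu rho^h-near-optimal, and by (2) and
   the near-optimality dimension there are fewer of them than rounds.  So, by
   induction on h, the depth-(H+1) cell containing x* gets flagged at level j,
   and the level-j candidate, compared with the others at fidelity z_Ltilde,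
   loses at most 3 nu rho^ht + 2 Psi(Ltilde) against x*. *)

Lemma expR_nat_ge1 (R : realType) n : 1 <= expR n%:R :> R.
Proof. by rewrite -expR0 ler_expR. Qed.

Section ScheduleLevels.
Variable R : realType.

Definition kblock Lt h := [seq kjlevel R Lt h m | m <- iota 1 (Lt %/ h)].

Lemma kscheduleE Lt :
  kschedule R Lt = flatten [seq [seq (h, u) | u <- kblock Lt h] | h <- iota 1 Lt].
Proof. by congr flatten; apply: eq_map => h; rewrite -map_comp. Qed.

Lemma truncn_ln_ge (y : R) j : expR j%:R <= y -> (j <= Num.truncn (ln y))%N.
Proof.
move=> ejy; have y0 : 0 < y := lt_le_trans (expR_gt0 _) ejy.
rewrite truncn_ge_nat; last exact/ln_ge0/(le_trans (expR_nat_ge1 _ _) ejy).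
by rewrite -ler_expR lnK.
Qed.

Lemma truncn_ln_le (y : R) j : y < expR j.+1%:R -> (Num.truncn (ln y) <= j)%N.
Proof.
move=> yej; rewrite truncn_le_nat; have [y1|y1] := lerP y 1.
  by apply: le_lt_trans (ln_le0 y1) _; rewrite ltr0n.
by rewrite -ltr_expR lnK // posrE (lt_trans ltr01 y1).
Qed.

Lemma kjmax_ge Lt j : expR j%:R <= Lt%:R :> R -> (j <= kjmax R Lt)%N.
Proof. exact: truncn_ln_ge. Qed.

Lemma kjlevel_ge Lt h m j : (0 < h * m)%N ->
  expR j%:R * (h * m)%:R <= Lt%:R :> R -> (j <= kjlevel R Lt h m)%N.
Proof. by move=> hm0 le; apply: truncn_ln_ge; rewrite ler_pdivlMr ?ltr0n. Qed.

Lemma kjlevel_le Lt h m j : (0 < h * m)%N ->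
  Lt%:R < expR j.+1%:R * (h * m)%:R :> R -> (kjlevel R Lt h m <= j)%N.
Proof. by move=> hm0 lt; apply: truncn_ln_le; rewrite ltr_pdivrMr ?ltr0n. Qed.

Lemma kblock_split Lt h j : (0 < h)%N ->
  exists r1 n r3, [/\ kblock Lt h = r1 ++ nseq n j ++ r3, all (leq j) r1
    & Lt%:R < 2 * n.+1%:R * (expR j%:R * h%:R) :> R].
Proof.
(* Round [m] has level [>= j] iff [m <= x] and level [<= j] iff [x / e < m],
   so rounds [floor (x / e) < m <= floor x] are exactly those of level [j]. *)
move=> h0; set e := expR j%:R; set x := Lt%:R / (e * h%:R).
have eh0 : 0 < e * h%:R by rewrite mulr_gt0 ?expR_gt0 ?ltr0n.
have x0 : 0 <= x by rewrite divr_ge0 // ltW.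
have xE : x * (e * h%:R) = Lt%:R by rewrite divfK ?gt_eqF.
have e1_ge2 : 2 <= expR 1 :> R by apply: le_trans (expR_ge1Dx 1); rewrite -natr1.
have xe1 : x / expR 1 <= x / 2.
  by rewrite ler_pdivrMr ?expR_gt0 //; nra.
set A := Num.truncn (x / expR 1); set B := Num.truncn x.
have AB : (A <= B)%N by apply: le_truncn; rewrite ler_pdivrMr ?expR_gt0 //; nra.
have BN : (B <= Lt %/ h)%N.
  rewrite leq_divRL // -(ler_nat R) natrM -xE mulrA ler_wpM2r ?ler0n //.
  apply: (@le_trans _ _ x); first by rewrite truncn_le.
  by rewrite ler_peMr // expR_nat_ge1.
have le_B m : (0 < m <= B)%N -> (j <= kjlevel R Lt h m)%N.
  case/andP=> m0 mB; apply: kjlevel_ge; first by rewrite muln_gt0 h0.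
  have mx : m%:R <= x by rewrite -truncn_ge_nat.
  rewrite -xE natrM -/e; nra.
have gt_A m : (A < m)%N -> (kjlevel R Lt h m <= j)%N.
  move=> Am; have m0 : (0 < m)%N by apply: leq_ltn_trans Am.
  have xm : x < m%:R * expR 1.
    by rewrite -ltr_pdivrMr ?expR_gt0 // -truncn_lt_nat // divr_ge0 ?expR_ge0.
  apply: kjlevel_le; first by rewrite muln_gt0 h0.
  rewrite -[j.+1]addn1 natrD expRD natrM -/e -xE; nra.
have iotaE : iota 1 (Lt %/ h) =
    iota 1 A ++ iota (1 + A) (B - A) ++ iota (1 + B) (Lt %/ h - B).
  by rewrite catA -iotaD subnKC // -iotaD subnKC.
exists [seq kjlevel R Lt h m | m <- iota 1 A], (B - A)%N,
  [seq kjlevel R Lt h m | m <- iota (1 + B) (Lt %/ h - B)]; split.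
- rewrite /kblock iotaE !map_cat; congr (_ ++ _ ++ _).
  have /all_pred1P -> :
      all (pred1 j) [seq kjlevel R Lt h m | m <- iota (1 + A) (B - A)].
    apply/allP => u /mapP [m].
    rewrite mem_iota add1n addSn subnKC // ltnS => /andP [Am mB] ->.
    by rewrite /= eqn_leq gt_A // le_B // (leq_ltn_trans _ Am) //= -ltnS.
  by rewrite size_map size_iota.
- apply/allP => u /mapP [m]; rewrite mem_iota => /andP [m1 mA] ->.
  by rewrite le_B // m1 (leq_trans _ AB) // -ltnS.
- have xB : x < B.+1%:R := truncnS_gt x.
  have Ax : A%:R <= x / expR 1 by rewrite truncn_le divr_ge0 ?expR_ge0.
  rewrite -xE ltr_pM2r // [(B - A).+1%:R]mulrSr natrB //; lra.
Qed.

End ScheduleLevels.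

Section KometoRuns.
Variables (R : realType) (X : Type) (K : nat) (xr : nat -> nat -> X)
  (fz : R -> X -> R) (zc : R -> R).

Local Notation step := (kstep K xr fz zc).
Local Notation run := (krun K xr fz zc).
Local Notation fv := (fval xr fz zc).

Lemma krun_nilE s s' : run s [::] s' -> s' = s.
Proof. by move=> H; inversion H. Qed.

Lemma krun_consE s h j r s' :
  run s ((h, j) :: r) s' -> exists2 s1, step s h j s1 & run s1 r s'.
Proof. by move=> H; inversion H; exists s1. Qed.

Lemma krun_cat s r1 r2 s' :
  run s (r1 ++ r2) s' -> exists2 s1, run s r1 s1 & run s1 r2 s'.
Proof.
elim: r1 s => [|[h j] r1 IH] s /=; first by exists s => //; constructor.
case/krun_consE => s1 step1 /IH [s2 run12 run2].
by exists s2 => //; apply: KRcons step1 run12.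
Qed.

Definition kstate_le (s s' : kstate) :=
  (forall h i u, kT s h i u -> kT s' h i u) /\ (forall h i, kO s h i -> kO s' h i).

Lemma kstep_le s h j s' : step s h j s' -> kstate_le s s'.
Proof. by case=> [i _ _|_] //; split=> [h' i' u|h' i'] /= ->. Qed.

Lemma krun_le s r s' : run s r s' -> kstate_le s s'.
Proof.
elim=> [//|s0 s1 s2 h j r0 /kstep_le [T01 O01] _ [T12 O12]].
by split=> *; [apply/T12/T01|apply/O12/O01].
Qed.

Definition opened_within (s : kstate) b := forall h i, kO s h i -> (h <= b)%N.

Lemma krun_opened_within s r s' b :
  run s r s' -> all (fun p => p.1 <= b)%N r ->
  opened_within s b -> opened_within s' b.
Proof.
elim=> [//|s0 s1 s2 h j r0 step01 _ IH] /= /andP [hb rb] O0.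
apply: (IH rb); case: step01 O0 => [i _ _|_] // O0 h' i' /= /orP [/O0 //|].
by case/andP => /eqP ->.
Qed.

Definition children_flagged (s : kstate) h c j :=
  kO s h c -> forall l, (l < K)%N -> kT s h.+1 (K * c + l)%N j.

Lemma krun_children_flagged s r s' h c j :
  run s r s' -> all (fun p => j <= p.2)%N r ->
  children_flagged s h c j -> children_flagged s' h c j.
Proof.
elim=> [//|s0 s1 s2 h' u r0 step01 _ IH] /= /andP [ju rj] F0.
apply: (IH rj); case: step01 F0 => [i _ _|_] // F0.
move=> /= /orP [/F0 F l lK|/andP [/eqP <- /eqP <-] l lK]; apply/orP.
  by left; apply: F.
by right; rewrite eqxx leq_addr ltn_add2l lK ju.
Qed.

Definition better h c j i := (i < K ^ h)%N && (fv h c j <= fv h i j).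

Lemma krun_nseq_better s n h j c s' :
  run s (nseq n (h, j)) s' -> (c < K ^ h)%N -> kT s h c j -> ~~ kO s' h c ->
  exists L, [/\ uniq L, size L = n, all (better h c j) L
              & all (fun i => ~~ kO s h i) L].
Proof.
elim: n s => [|n IH] s /= run_s cK Tc Oc; first by exists [::].
have [s1 step1 run1] := krun_consE run_s.
have [T01 O01] := kstep_le step1.
have Oc1 : ~~ kO s1 h c by apply: contra Oc; apply: (krun_le run1).2.
have [L [uL sL bL oL]] := IH s1 run1 cK (T01 _ _ _ Tc) Oc.
have cand : candidate K s h j c.
  by rewrite /candidate cK Tc andbT; apply: contra Oc1; apply: O01.
case: step1 Oc1 oL {T01 O01 run1} => [i ci imax|none]; last first.
  by rewrite (negbTE (none c)) in cand.
move=> _ oL; exists (i :: L); split => /=.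
- rewrite uL andbT; apply/negP => /(allP oL) /=.
  by rewrite !eqxx orbT.
- by rewrite sL.
- by rewrite bL andbT /better (imax c cand); case/and3P: ci => ->.
- case/and3P: ci => _ -> _ /=; apply/allP => k /(allP oL) /=.
  by rewrite negb_or => /andP [].
Qed.

Definition enough_openings (levels : seq nat) h c j :=
  exists r1 n r3, [/\ levels = r1 ++ nseq n j ++ r3, all (leq j) r1
    & forall L, uniq L -> all (better h c j) L -> (size L < n)%N].

Lemma krun_block_flags_children s levels s' h c j :
  run s [seq (h, u) | u <- levels] s' -> enough_openings levels h c j ->
  (c < K ^ h)%N -> kT s h c j -> children_flagged s h c j ->
  forall l, (l < K)%N -> kT s' h.+1 (K * c + l)%N j.
Proof.
move=> + [r1 [n [r3 [levelsE jr1 few]]]] cK Tc F.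
rewrite levelsE !map_cat map_nseq => /krun_cat [s1 run1 /krun_cat [s2 run2 run3]].
have F2 : children_flagged s2 h c j.
  apply: krun_children_flagged run2 _ _; first by rewrite all_nseq leqnn orbT.
  by apply: krun_children_flagged run1 _ F; rewrite all_map.
have Oc2 : kO s2 h c.
  apply/negPn/negP => /(krun_nseq_better run2 cK ((krun_le run1).1 _ _ _ Tc)).
  by case=> L [uL sL bL _]; have := few L uL bL; rewrite sL ltnn.
by move=> l lK; apply: (krun_le run3).1; apply: F2.
Qed.

Section ScheduleAlongPath.
Variables (Q : nat -> nat -> Prop) (Lt jm j H : nat).
Hypotheses (j_le_jm : (j <= jm)%N) (Q_root : Q 0 0)
  (Q_lt : forall h c, Q h c -> (c < K ^ h)%N)
  (Q_child : forall h c, Q h c -> exists2 l, (l < K)%N & Q h.+1 (K * c + l)%N)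
  (Q_enough : forall h c, (0 < h <= H)%N -> Q h c ->
     enough_openings (kblock R Lt h) h c j).

Let s0 := open_cell K kinit 0 0 jm.

Lemma krun_blocks_flag_path n s :
  (n <= H)%N ->
  run s0 (flatten [seq [seq (h, u) | u <- kblock R Lt h] | h <- iota 1 n]) s ->
  opened_within s n /\ exists2 c, Q n.+1 c & kT s n.+1 c j.
Proof.
elim: n s => [|n IH] s nH.
  move=> /krun_nilE ->; split; first by move=> h i /= /andP [/eqP ->].
  have [l lK Ql] := Q_child Q_root.
  by exists (K * 0 + l)%N => //=; rewrite muln0 add0n lK j_le_jm.
rewrite -[n.+1]addn1 iotaD addn1 map_cat flatten_cat /= cats0.
case/krun_cat=> s1 run1 run2.
have [open1 [c Qc Tc]] := IH s1 (ltnW nH) run1.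
split.
  apply: krun_opened_within run2 _ _; first by apply/allP => _ /mapP [u _ ->].
  by move=> h i /open1 /leqW.
have [l lK Ql] := Q_child Qc; exists (K * c + l)%N => //.
rewrite add1n in run2; apply: krun_block_flags_children run2 _ _ Tc _ _ lK.
- by apply: Q_enough; rewrite ?nH.
- exact: Q_lt.
- by move=> /open1; rewrite ltnn.
Qed.

Lemma kschedule_flags_path s :
  (H <= Lt)%N -> run s0 (kschedule R Lt) s -> exists2 c, Q H.+1 c & kT s H.+1 c j.
Proof.
move=> HLt; rewrite kscheduleE -[in iota _ Lt](subnKC HLt) iotaD.
rewrite map_cat flatten_cat.
case/krun_cat=> s1 run1 run2.
have [_ [c Qc Tc]] := krun_blocks_flag_path (leqnn H) run1.
by exists c => //; apply: (krun_le run2).1.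
Qed.

End ScheduleAlongPath.

End KometoRuns.

Lemma hier_partition_child (X : Type) K P (xr : nat -> nat -> X) h i x :
  hier_partition K P xr -> (i < K ^ h)%N -> P h i x ->
  exists2 l, (l < K)%N & (K * i + l < K ^ h.+1)%N /\ P h.+1 (K * i + l)%N x.
Proof.
case=> _ P_children _ _ iK; rewrite (P_children _ _ iK) => -[l /= lK Pl].
exists l => //; split => //; rewrite expnS.
apply: (@leq_trans (K * i + K)); first by rewrite ltn_add2l.
by rewrite addnC -mulnS leq_mul2l iK orbT.
Qed.

Lemma simple_regret_max (R : realType) (X : Type) (f : X -> R) xs x :
  (forall y, f y <= f xs) -> simple_regret f x = (f xs - f x)%:E.
Proof.
move=> xs_max; rewrite /simple_regret EFinB; congr (_ - _)%E.
apply/le_anti/andP; split; last by apply: ereal_sup_ubound; exists xs.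
by apply: ge_ereal_sup => _ [y _ <-]; rewrite lee_fin.
Qed.

Section KometoRegret.
Variables (R : realType) (X : Type) (K : nat) (P : nat -> nat -> set X)
  (xr : nat -> nat -> X) (nu rho d C : R) (f : X -> R) (fz : R -> X -> R)
  (zeta : R -> \bar R) (g : R -> R -> R) (lam : R -> R) (zc : R -> R) (xs : X).
Hypotheses (hP : hier_partition K P xr) (nu_gt0 : 0 < nu) (rho01 : 0 < rho < 1)
  (d_ge0 : 0 <= d) (C_gt1 : 1 < C) (fid : fidelity_approx f fz zeta g lam zc).
Hypothesis xs_cell : forall h i x, (i < K ^ h)%N -> P h i xs -> P h i x ->
  f xs - nu * rho ^+ h <= f x.
Hypothesis xs_few : forall h (s : seq nat), uniq s ->
  (forall i, i \in s -> (i < K ^ h)%N /\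
     ((f xs - 3 * nu * rho ^+ h)%:E <= cell_sup f (P h i))%E) ->
  (size s)%:R <= C * rho `^ (- (d * h%:R)).

Let rho_gt0 : 0 < rho. Proof. by case/andP: rho01. Qed.
Let rho_le1 : 0 < rho <= 1. Proof. by case/andP: rho01 => -> /ltW. Qed.
Let C_ge0 : 0 <= C. Proof. exact/ltW/(lt_trans ltr01). Qed.

Lemma budget_factor_ge1 ht : 0 <= ht -> 1 <= C * rho `^ (- (d * ht)).
Proof.
move=> ht0; apply: le_trans (ltW C_gt1) _; rewrite ler_peMr //.
by rewrite -(powRr0 rho); apply: ger_powR; rewrite // oppr_le0 mulr_ge0.
Qed.

Lemma cost_to_bias_ge0 c : 1 <= c -> (0 <= cost_to_bias zeta zc c)%E.
Proof. by case: fid => zeta_ge0 _ _ zc01 /zc01 [/zeta_ge0]. Qed.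

Lemma f_le_of_fz_le c r a b : 1 <= c -> (cost_to_bias zeta zc c <= r%:E)%E ->
  fz (zc c) a <= fz (zc c) b -> f a <= f b + 2 * r.
Proof.
case: fid => _ g_mono bias_le zc01 /zc01 [z01 _] bias_r fz_ab.
have near y : `|f y - g (zc c) (fz (zc c) y)| <= r.
  rewrite -lee_fin; apply: le_trans bias_r; apply: le_trans (bias_le _ z01).
  by apply: ereal_sup_ubound; exists y.
have g_ab := ltW_homo (g_mono _ z01) fz_ab.
by move: (near a) (near b); rewrite !ler_norml => /andP [? ?] /andP [? ?]; lra.
Qed.

Lemma better_cells_size h c j L : (c < K ^ h)%N -> P h c xs ->
  (cost_to_bias zeta zc (expR j%:R) <= (nu * rho ^+ h)%:E)%E ->
  uniq L -> all (better K xr fz zc h c j) L ->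
  (size L)%:R <= C * rho `^ (- (d * h%:R)).
Proof.
move=> cK Pc bias_j uL bL; have [_ _ _ Pxr] := hP.
apply: xs_few uL _ => i /(allP bL) /andP [iK fv_ci]; split => //.
apply: (@le_trans _ _ (f (xr h i))%:E); last first.
  by apply: ereal_sup_ubound; exists (xr h i) => //; apply: Pxr.
have := f_le_of_fz_le (expR_nat_ge1 _ _) bias_j fv_ci.
by have := xs_cell cK Pc (Pxr _ _ cK); rewrite lee_fin; lra.
Qed.

Lemma optimal_cell_enough_openings Lt h c j ht : (0 < h)%N -> h%:R <= ht ->
  (c < K ^ h)%N -> P h c xs ->
  (cost_to_bias zeta zc (expR j%:R) <= (nu * rho `^ ht)%:E)%E ->
  C * rho `^ (- (d * ht)) <= Lt%:R / (4 * ht * expR j%:R) ->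
  enough_openings K xr fz zc (kblock R Lt h) h c j.
Proof.
move=> h0 h_ht cK Pc bias_j YLt.
have [r1 [n [r3 [blockE jr1 Lt_lt]]]] := kblock_split R Lt j h0.
exists r1, n, r3; split => // L uL bL.
have sizeL : (size L)%:R <= C * rho `^ (- (d * ht)).
  apply: le_trans (better_cells_size cK Pc _ uL bL) _.
    apply: le_trans bias_j _; rewrite lee_fin ler_wpM2l ?(ltW nu_gt0) //.
    by rewrite -powR_mulrn ?(ltW rho_gt0) //; apply: ger_powR.
  by rewrite ler_wpM2l //; apply: ger_powR; rewrite // lerN2 ler_wpM2l.
have ht0 : 0 < ht by apply: lt_le_trans h_ht; rewrite ltr0n.
have e0 : 0 < expR j%:R := expR_gt0 _.
have Y1 := budget_factor_ge1 (ltW ht0).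
set Y := C * rho `^ (- (d * ht)) in sizeL YLt Y1.
have Y2 : Y * 2 < n.+1%:R.
  have D0 : 0 < 2 * ht * expR j%:R by rewrite !mulr_gt0.
  rewrite -(ltr_pM2r D0); move: YLt; rewrite ler_pdivlMr ?mulr_gt0 // => YLt.
  have : 0 <= n.+1%:R * expR j%:R :> R by rewrite mulr_ge0 ?ler0n ?(ltW e0).
  nra.
by rewrite -(ltr_nat R); rewrite -[n.+1%:R]natr1 in Y2; lra.
Qed.

Lemma budget_lower Lt j ht : 0 < ht ->
  C * rho `^ (- (d * ht)) <= Lt%:R / (4 * ht * expR j%:R) ->
  4 * ht * expR j%:R <= Lt%:R.
Proof.
move=> ht0 /(le_trans (budget_factor_ge1 (ltW ht0))).
by rewrite ler_pdivlMr ?mul1r // !mulr_gt0 ?expR_gt0.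
Qed.

Lemma budget_ge1 Lt j ht : 0 < ht ->
  C * rho `^ (- (d * ht)) <= Lt%:R / (4 * ht * expR j%:R) -> 1 <= Lt%:R :> R.
Proof.
move=> ht0 /(budget_lower ht0) Lt_ge; rewrite ler1n -(ltr0n R).
by apply: lt_le_trans Lt_ge; rewrite !mulr_gt0 ?expR_gt0.
Qed.

Lemma kometo_flags_optimal_cell Lt j ht s : 0 < ht ->
  (j <= kjmax R Lt)%N -> (Num.truncn ht <= Lt)%N ->
  (cost_to_bias zeta zc (expR j%:R) <= (nu * rho `^ ht)%:E)%E ->
  C * rho `^ (- (d * ht)) <= Lt%:R / (4 * ht * expR j%:R) ->
  krun K xr fz zc (open_cell K kinit 0 0 (kjmax R Lt)) (kschedule R Lt) s ->
  exists2 c, (c < K ^ (Num.truncn ht).+1)%N /\ P (Num.truncn ht).+1 c xs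
           & kT s (Num.truncn ht).+1 c j.
Proof.
move=> ht0 jm HLt bias_j YLt run_s; have [P00 _ _ _] := hP.
pose Q h c := (c < K ^ h)%N /\ P h c xs.
apply: (kschedule_flags_path (Q := Q)) run_s => //.
- by rewrite /Q expn0 P00.
- by move=> h c [].
- by move=> h c [cK Pc]; apply: hier_partition_child hP cK Pc.
- move=> h c /andP [h0 hH] [cK Pc].
  apply: (optimal_cell_enough_openings (ht := ht)) => //.
  apply: (@le_trans _ _ (Num.truncn ht)%:R); first by rewrite ler_nat.
  by rewrite truncn_le ltW.
Qed.

Lemma kometo_output_ge Lt x r : 1 <= Lt%:R :> R ->
  (cost_to_bias zeta zc Lt%:R <= r%:E)%E -> kometo_output K xr fz zc Lt x ->
  exists2 s, krun K xr fz zc (open_cell K kinit 0 0 (kjmax R Lt)) (kschedule R Lt) s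
    & forall j b h c, (j <= kjmax R Lt)%N ->
      (cost_to_bias zeta zc (expR j%:R) <= b%:E)%E -> kT s h c j ->
      f (xr h c) <= f x + 2 * b + 2 * r.
Proof.
move=> Lt1 bias_Lt [s [xc [js [run_s xc_best _ xc_sel ->]]]].
exists s => // j b h c jm bias_j Tc.
have [h' [i [_ xcj best]]] := xc_best j jm.
have := f_le_of_fz_le (expR_nat_ge1 _ _) bias_j (best _ _ Tc).
have := f_le_of_fz_le Lt1 bias_Lt (xc_sel j jm).
by rewrite xcj /fval; lra.
Qed.

Lemma kometo_regret_le Lt j ht r x : 0 < ht ->
  (cost_to_bias zeta zc (expR j%:R) <= (nu * rho `^ ht)%:E)%E ->
  C * rho `^ (- (d * ht)) <= Lt%:R / (4 * ht * expR j%:R) ->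
  (cost_to_bias zeta zc Lt%:R <= r%:E)%E -> kometo_output K xr fz zc Lt x ->
  f xs - f x <= 3 * nu / rho * rho `^ ht + 2 * r.
Proof.
move=> ht0 bias_j YLt bias_Lt out.
have Lt1 := budget_ge1 ht0 YLt.
have r0 : 0 <= r.
  by rewrite -lee_fin; apply: le_trans bias_Lt; apply: cost_to_bias_ge0.
have [s run_s out_ge] := kometo_output_ge Lt1 bias_Lt out.
set Z := rho `^ ht; set W := nu / rho * Z.
have Z0 : 0 <= Z := powR_ge0 _ _.
have W0 : 0 <= W by rewrite mulr_ge0 // divr_ge0 // ltW.
have rhoW : rho * W = nu * Z by rewrite /W mulrA mulrCA divff ?mulr1 // gt_eqF.
have -> : 3 * nu / rho * Z = 3 * W by rewrite /W !mulrA.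
have [P00 _ _ Pxr] := hP.
(* The schedule argument needs [1 <= ht] (to get [expR j <= Lt]); below that,
   the root cell alone bounds the regret by [nu]. *)
have [ht1|ht1] := lerP ht 1.
  have root y : P 0 0 y by rewrite P00.
  have := @xs_cell 0 0 x (ltn0Sn 0) (root xs) (root x).
  have nuW : nu <= W.
    by rewrite -(ler_pM2l rho_gt0) rhoW mulrC ler_wpM2l ?ger1_powR // ltW.
  rewrite expr0 mulr1; lra.
have Lt_ge := budget_lower ht0 YLt.
have e1 := expR_nat_ge1 R j.
have jm : (j <= kjmax R Lt)%N by apply: kjmax_ge; nra.
have HLt : (Num.truncn ht <= Lt)%N.
  rewrite -(ler_nat R); apply: le_trans (_ : ht <= _).
    by rewrite truncn_le ltW.
  nra.
have [c [cK Pc] Tc] := kometo_flags_optimal_cell ht0 jm HLt bias_j YLt run_s.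
have := out_ge _ _ _ _ jm bias_j Tc; rewrite -/Z.
have := xs_cell cK Pc (Pxr _ _ cK).
have : nu * rho ^+ (Num.truncn ht).+1 <= nu * Z.
  rewrite ler_wpM2l ?(ltW nu_gt0) // -powR_mulrn ?(ltW rho_gt0) //.
  exact/ger_powR/ltW/truncnS_gt.
have : nu * Z <= W by rewrite -rhoW ler_piMl //; case/andP: rho_le1.
lra.
Qed.

End KometoRegret.

Unset Implicit Arguments. Set Strict Implicit.

Theorem lemma7 (R : realType) (X : Type) (K : nat)
    (P : nat -> nat -> set X) (xr : nat -> nat -> X)
    (nu rho d C : R) (f : X -> R)
    (fz : R -> X -> R) (zeta : R -> \bar R) (g : R -> R -> R)
    (lam : R -> R) (zc : R -> R)
    (Lam : R) (Psi : R -> \bar R) (j : nat) (ht : R) :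
  (2 <= K)%N ->
  hier_partition K P xr ->
  0 < nu -> 0 < rho < 1 -> 0 <= d -> 1 < C ->
  class_S K P nu rho d C f ->
  fidelity_approx f fz zeta g lam zc ->
  1 <= Lam ->
  (forall a b, 1 <= a -> a <= b -> (Psi b <= Psi a)%E) ->
  (forall c, 1 <= c -> (cost_to_bias zeta zc c <= Psi c)%E) ->
  0 < ht ->
  (Psi (expR j%:R) <= (nu * rho `^ ht)%:E)%E ->
  (Ltilde K Lam)%:R / (4 * ht * expR j%:R) >= C * rho `^ (- (d * ht)) ->
  forall x : X, kometo_output K xr fz zc (Ltilde K Lam) x ->
  (simple_regret f x <=
     (3 * nu / rho * rho `^ ht)%:E + 2%:E * Psi (Ltilde K Lam)%:R)%E.
Proof.
move=> _ hP nu0 rho01 d0 C1 [xs [xs_max xs_cell xs_few]] fid _ _ Phi_Psi ht0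
  bias_j YLt x out.
rewrite (simple_regret_max _ xs_max).
have Lt1 := budget_ge1 rho01 d0 C1 ht0 YLt.
have bias_j' := le_trans (Phi_Psi _ (expR_nat_ge1 _ _)) bias_j.
move: (Phi_Psi _ Lt1); case: (Psi _) => [r||] Phi_Lt.
- rewrite -EFinM -EFinD lee_fin.
  exact: (kometo_regret_le hP nu0 rho01 d0 C1 fid xs_cell xs_few ht0 bias_j' YLt
    Phi_Lt out).
- by rewrite mulry gtr0_sg // mul1e leey.
- by have := le_trans (cost_to_bias_ge0 fid Lt1) Phi_Lt.
Qed.
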